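(* Suppose $\operatorname{tr}\big((I-\widehat\Pi)\Pi^*\big)\le\delta^2$ for some $\delta\in[0,1)$, and let $\widehat\Pi_{m^*}$ be the orthogonal projector onto the subspace spanned by eigenvectors of $\widehat\Pi$ corresponding to its $m^*$ largest eigenvalues. Then $\operatorname{tr}\big((I-\widehat\Pi_{m^*})\Pi^*\big)\le\delta^2/(1-\delta^2)$.
   Context: $\Pi^*$ is the orthogonal projector onto an $m^*$-dimensional subspace of $\mathbb R^d$. $I$ is the $d\times d$ identity, $A\preceq B$ means $B-A$ is positive semidefinite. Let $\hat\beta_1,\dots,\hat\beta_L\in\mathbb R^d$ be arbitrary vectors, $\mathcal A_{m^*}=\{\Pi\in\mathbb R^{d\times d}:\Pi=\Pi^\top,\ 0\preceq\Pi\preceq I,\ \operatorname{tr}\Pi\le m^*\}$, and let $\widehat\Pi$ be a minimizer over $\Pi\in\mathcal A_{m^*}$ of $\max_\ell\hat\beta_\ell^\top(I-\Pi)\hat\beta_\ell$. *)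

From HB Require Import structures.
From mathcomp Require Import all_boot all_order all_algebra.
From mathcomp Require Export reals.
Set Implicit Arguments. Unset Strict Implicit. Unset Printing Implicit Defensive.
Import Order.TTheory GRing.Theory Num.Theory.
Local Open Scope ring_scope.

Definition psd (R : realFieldType) (d : nat) (A : 'M[R]_d) : Prop :=
  forall v : 'cV[R]_d, 0 <= (v^T *m A *m v) 0 0.

Definition loewner_le (R : realFieldType) (d : nat) (A B : 'M[R]_d) : Prop :=
  psd (B - A).

Definition orth_proj (R : realFieldType) (d m : nat) (P : 'M[R]_d) : Prop :=
  P^T = P /\ P *m P = P /\ \rank P = m.

Definition in_Aset (R : realFieldType) (d m : nat) (P : 'M[R]_d) : Prop :=
  P^T = P /\ loewner_le 0 P /\ loewner_le P 1%:M /\ \tr P <= m%:R.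

(* Objective: max_l beta_l^T (I - Π) beta_l  (L >= 1 assumed separately). *)
Definition objective (R : realFieldType) (d L : nat) (beta : 'I_L -> 'cV[R]_d)
  (P : 'M[R]_d) : R :=
  \big[Num.max/0]_(l < L) ((beta l)^T *m (1%:M - P) *m beta l) 0 0.

Definition top_eig_proj (R : realFieldType) (d m : nat) (Pi Pm : 'M[R]_d) : Prop :=
  exists (U : 'M[R]_d) (lam : 'rV[R]_d),
    U^T *m U = 1%:M /\
    (forall i j : 'I_d, (i <= j)%N -> lam 0 j <= lam 0 i) /\
    Pi = U *m diag_mx lam *m U^T /\
    Pm = \sum_(i < d | (i < m)%N) (col i U *m (col i U)^T).

From HB Require Import structures.
From mathcomp Require Import all_boot all_order all_algebra.
From mathcomp Require Import ring lra zify.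
From mathcomp Require Import reals.
Import Order.TTheory GRing.Theory Num.Theory.
Local Open Scope ring_scope.

(* Write Pihat = U diag(lam) U^T and a_i := u_i^T Pistar u_i for the columns
   u_i of U.  Then 0 <= a_i, lam_i <= 1, sum a_i = m, sum lam_i <= m, the
   hypothesis reads S := sum (1 - lam_i) a_i <= delta^2 and the goal reads
   x := sum_{i >= m} a_i <= delta^2 / (1 - delta^2).  Among weights in [0,1]
   of total mass m, sum lam_i a_i is largest when the mass sits on the top m
   eigenvalues, so S >= m - sum_{i < m} lam_i >= sum_{i >= m} lam_i.  Hence
   every tail eigenvalue is at most S, and S >= sum_{i >= m} (1 - lam_i) a_i
   >= (1 - S) x, i.e. x <= S / (1 - S). *)

Lemma col_quad_conjE (R : comNzRingType) d (U M : 'M[R]_d) (i : 'I_d) :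
  ((col i U)^T *m M *m col i U) 0 0 = (U^T *m M *m U) i i.
Proof. by rewrite tr_col -row_mul colE mulmxA -row_mul -colE !mxE. Qed.

Lemma psd_conj_diag_ge0 {R : realFieldType} {d} (U : 'M[R]_d) {M : 'M[R]_d}
    (i : 'I_d) :
  psd M -> 0 <= (U^T *m M *m U) i i.
Proof. by move=> M_psd; rewrite -col_quad_conjE. Qed.

Lemma sym_idem_psd {R : realFieldType} {d} {P : 'M[R]_d} :
  P^T = P -> P *m P = P -> psd P.
Proof.
move=> P_sym P_idem v.
have -> : v^T *m P *m v = (P *m v)^T *m (P *m v).
  by rewrite trmx_mul P_sym mulmxA -[v^T *m P *m P]mulmxA P_idem.
by rewrite mxE; apply: sumr_ge0 => k _; rewrite mxE -expr2 sqr_ge0.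
Qed.

Lemma sym_idem_loewner_unit {R : realFieldType} {d} {P : 'M[R]_d} :
  P^T = P -> P *m P = P -> loewner_le 0 P /\ loewner_le P 1%:M.
Proof.
move=> P_sym P_idem; split; first by rewrite /loewner_le subr0; exact: sym_idem_psd.
apply: sym_idem_psd; first by rewrite linearB /= trmx1 P_sym.
by rewrite mulmxBl mul1mx !mulmxBr mulmx1 P_idem subrr subr0.
Qed.

(* Factor A = C B through its rank; idempotence forces B C = 1. *)
Lemma mxtrace_idem (F : fieldType) n (A : 'M[F]_n) :
  A *m A = A -> \tr A = (\rank A)%:R.
Proof.
move=> A_idem; set C := col_base A; set B := row_base A.
have CB : C *m B = A by exact: mulmx_base.
have B_free : row_free B by exact: row_base_free.
have CT_free : row_free C^T by rewrite /row_free mxrank_tr; exact: col_base_full.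
have CBC : C *m B *m C = C.
  by apply: (row_free_inj B_free); rewrite /= CB -mulmxA CB A_idem.
have BC : B *m C = 1%:M.
  apply: trmx_inj; apply: (row_free_inj CT_free).
  by rewrite -trmx_mul mulmxA CBC trmx1 mul1mx.
by rewrite -{1}CB mxtrace_mulC BC mxtrace1.
Qed.

Lemma mxtrace_diag_conj_mul (R : comNzRingType) d (U M : 'M[R]_d) (lam : 'rV[R]_d) :
  \tr (U *m diag_mx lam *m U^T *m M) = \sum_i lam 0 i * (U^T *m M *m U) i i.
Proof.
rewrite -!mulmxA mxtrace_mulC -mulmxA mul_diag_mx.
by apply: eq_bigr => i _; rewrite mxE !mulmxA.
Qed.

Lemma mxtrace_colproj_mul (R : comNzRingType) d (U M : 'M[R]_d) (P : pred 'I_d) :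
  \tr ((\sum_(i | P i) col i U *m (col i U)^T) *m M) =
  \sum_(i | P i) (U^T *m M *m U) i i.
Proof.
rewrite mulmx_suml linear_sum /=; apply: eq_bigr => i _.
by rewrite -mulmxA mxtrace_mulC /mxtrace big_ord1 col_quad_conjE.
Qed.

Section OrthogonalConjugation.

Variables (R : comUnitRingType) (d : nat) (U : 'M[R]_d).
Hypothesis U_orth : U^T *m U = 1%:M.

Lemma mxtrace_conj_orth (M : 'M[R]_d) : \tr (U^T *m M *m U) = \tr M.
Proof. by rewrite mxtrace_mulC mulmxA (mulmx1C U_orth) mul1mx. Qed.

Lemma conj_orth1B (M : 'M[R]_d) :
  U^T *m (1%:M - M) *m U = 1%:M - U^T *m M *m U.
Proof. by rewrite mulmxBr mulmxBl mulmx1 U_orth. Qed.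

Lemma conj_orth_diag (lam : 'rV[R]_d) :
  U^T *m (U *m diag_mx lam *m U^T) *m U = diag_mx lam.
Proof. by rewrite !mulmxA U_orth mul1mx -mulmxA U_orth mulmx1. Qed.

End OrthogonalConjugation.

Lemma loewner_unit_conj_diag {R : realFieldType} {d} {U M : 'M[R]_d} (i : 'I_d) :
  U^T *m U = 1%:M -> loewner_le 0 M -> loewner_le M 1%:M ->
  0 <= (U^T *m M *m U) i i <= 1.
Proof.
move=> U_orth M_ge0 M_le1.
have := psd_conj_diag_ge0 U i M_le1; have := psd_conj_diag_ge0 U i M_ge0.
rewrite subr0 conj_orth1B //.
have -> : (1%:M - U^T *m M *m U) i i = 1 - (U^T *m M *m U) i i by rewrite !mxE eqxx.
by rewrite subr_ge0 => -> ->.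
Qed.

Lemma sorted_threshold {R : numDomainType} {n m : nat} {lam : 'I_n -> R} :
  (m <= n)%N -> (forall i j : 'I_n, (i <= j)%N -> lam j <= lam i) ->
  exists c, (forall i : 'I_n, (i < m)%N -> c <= lam i) /\
            (forall i : 'I_n, ~~ (i < m)%N -> lam i <= c).
Proof.
case: n lam => [|n] lam m_le lam_sorted; first by exists 0; split=> -[].
by exists (lam (inord m.-1)); split=> i i_m; apply: lam_sorted; rewrite inordK; lia.
Qed.

Section TopEigenvalueWeights.

Variables (R : realFieldType) (d m : nat) (a lam : 'I_d -> R).
Hypotheses (m_le_d : (m <= d)%N)
  (a_unit : forall i, 0 <= a i <= 1) (lam_unit : forall i, 0 <= lam i <= 1)
  (lam_sorted : forall i j : 'I_d, (i <= j)%N -> lam j <= lam i)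
  (sum_a : \sum_i a i = m%:R) (sum_lam : \sum_i lam i <= m%:R).

Let a_ge0 i : 0 <= a i. Proof. by case/andP: (a_unit i). Qed.
Let a_le1 i : a i <= 1. Proof. by case/andP: (a_unit i). Qed.
Let lam_ge0 i : 0 <= lam i. Proof. by case/andP: (lam_unit i). Qed.
Let lam_le1 i : lam i <= 1. Proof. by case/andP: (lam_unit i). Qed.

Let top := fun i : 'I_d => (i < m)%N.
Let defect := \sum_i (1 - lam i) * a i.
Let tail_mass := \sum_(i | ~~ top i) a i.

Lemma tail_mass_eq : tail_mass = \sum_(i | top i) (1 - a i).
Proof.
have card_top : \sum_(i | top i) (1 : R) = m%:R.
  by rewrite -(big_ord_widen _ (fun _ => 1) m_le_d) sumr_const card_ord.
rewrite sumrB card_top -sum_a (bigID top) /= /tail_mass; lra.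
Qed.

Lemma weighted_sum_le_top : \sum_i lam i * a i <= \sum_(i | top i) lam i.
Proof.
have [c [c_top c_tail]] := sorted_threshold m_le_d lam_sorted.
have tail_le : \sum_(i | ~~ top i) lam i * a i <= c * tail_mass.
  by rewrite mulr_sumr; apply: ler_sum => i /c_tail ?; apply: ler_wpM2r.
have top_ge :
    c * \sum_(i | top i) (1 - a i) <= \sum_(i | top i) lam i * (1 - a i).
  rewrite mulr_sumr; apply: ler_sum => i /c_top ?.
  by apply: ler_wpM2r; rewrite ?subr_ge0.
have split_top : \sum_(i | top i) lam i =
    \sum_(i | top i) lam i * a i + \sum_(i | top i) lam i * (1 - a i).
  by rewrite -big_split; apply: eq_bigr => i _ /=; ring.
rewrite -tail_mass_eq in top_ge; rewrite (bigID top) /= split_top; lra.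
Qed.

Lemma tail_eigenvalue_le_defect (j : 'I_d) : ~~ top j -> lam j <= defect.
Proof.
move=> j_tail.
have defect_eq : defect = m%:R - \sum_i lam i * a i.
  by rewrite -sum_a -sumrB; apply: eq_bigr => i _ /=; ring.
have lam_j_le : lam j <= \sum_(i | ~~ top i) lam i.
  by rewrite (bigD1 j) //= lerDl; apply: sumr_ge0.
have := weighted_sum_le_top; have := sum_lam.
rewrite [\sum_i lam i](bigID top) /=; lra.
Qed.

Lemma tail_mass_le_defect : (1 - defect) * tail_mass <= defect.
Proof.
have top_ge0 : 0 <= \sum_(i | top i) (1 - lam i) * a i.
  by apply: sumr_ge0 => i _; apply: mulr_ge0; rewrite ?subr_ge0.
have tail_ge : (1 - defect) * tail_mass <= \sum_(i | ~~ top i) (1 - lam i) * a i.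
  rewrite mulr_sumr; apply: ler_sum => i /tail_eigenvalue_le_defect ?.
  by apply: ler_wpM2r; rewrite ?lerD2l ?lerN2.
apply: le_trans tail_ge _.
by rewrite /defect [X in _ <= X](bigID top) /= lerDr.
Qed.

Lemma tail_mass_le (delta : R) : 0 <= delta < 1 -> defect <= delta ^+ 2 ->
  \sum_(i : 'I_d | ~~ (i < m)%N) a i <= delta ^+ 2 / (1 - delta ^+ 2).
Proof.
move=> /andP[delta_ge0 delta_lt1] defect_le.
have tail_ge0 : 0 <= tail_mass by exact: sumr_ge0.
have delta2_lt1 : delta ^+ 2 < 1 by rewrite expr2; nra.
rewrite ler_pdivlMr ?subr_gt0 // -/tail_mass.
have := tail_mass_le_defect; nra.
Qed.

End TopEigenvalueWeights.

Theorem lemma3 (R : realType) (d mstar L : nat) (Pistar : 'M[R]_d)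
  (beta : 'I_L -> 'cV[R]_d) (Pihat Pihat_m : 'M[R]_d) (delta : R) :
  (mstar <= d)%N ->
  (0 < L)%N ->
  orth_proj mstar Pistar ->
  in_Aset mstar Pihat ->
  (forall P : 'M[R]_d, in_Aset mstar P -> objective beta Pihat <= objective beta P) ->
  0 <= delta -> delta < 1 ->
  \tr ((1%:M - Pihat) *m Pistar) <= delta ^+ 2 ->
  top_eig_proj mstar Pihat Pihat_m ->
  \tr ((1%:M - Pihat_m) *m Pistar) <= delta ^+ 2 / (1 - delta ^+ 2).
Proof.
move=> m_le_d _ [Ps_sym [Ps_idem Ps_rank]] [_ [Ph_ge0 [Ph_le1 Ph_tr]]] _
  delta_ge0 delta_lt1 defect_le [U [lam [U_orth [lam_sorted [Ph_eq Pm_eq]]]]].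
set A := U^T *m Pistar *m U.
have [Ps_ge0 Ps_le1] := sym_idem_loewner_unit Ps_sym Ps_idem.
have diag_Ph : U^T *m Pihat *m U = diag_mx lam by rewrite Ph_eq conj_orth_diag.
have trA : \sum_i A i i = \tr Pistar by rewrite -/(\tr A) mxtrace_conj_orth.
have tail_eq : \tr ((1%:M - Pihat_m) *m Pistar) =
    \sum_(i : 'I_d | ~~ (i < mstar)%N) A i i.
  rewrite mulmxBl mul1mx raddfB /= Pm_eq mxtrace_colproj_mul -trA.
  by rewrite (bigID (fun i : 'I_d => (i < mstar)%N)) /= addrC addrK.
have defect_eq : \tr ((1%:M - Pihat) *m Pistar) = \sum_i (1 - lam 0 i) * A i i.
  rewrite mulmxBl mul1mx raddfB /= Ph_eq mxtrace_diag_conj_mul -trA -sumrB.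
  by apply: eq_bigr => i _; rewrite mulrBl mul1r.
rewrite tail_eq.
apply: (@tail_mass_le _ _ _ (fun i => A i i) (fun i => lam 0 i)) => //.
- by move=> i; apply: loewner_unit_conj_diag.
- move=> i; have := loewner_unit_conj_diag i U_orth Ph_ge0 Ph_le1.
  by rewrite diag_Ph mxE eqxx mulr1n.
- by rewrite trA mxtrace_idem // Ps_rank.
- by rewrite -mxtrace_diag -diag_Ph mxtrace_conj_orth.
- by rewrite delta_ge0.
- by rewrite -defect_eq.
Qed.
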